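(* In the setting described in the context, let $0<r\le1$ and $k\ge0$, and let $s\in S\setminus(T\cup W_2)$ with $s\in U^k_r$. Then for every move $a_2\in\Gamma_2(s)$: either (1) $\mathrm{Dest}_k(s,a_2)\cap U^k_{>r}\ne\emptyset$, or (2) $\mathrm{Dest}_k(s,a_2)\subseteq U^k_r$ and there is a state $t\in\mathrm{Dest}_k(s,a_2)$ with $\ell_k(t)<\ell_k(s)$.
   Context: Concurrent game structure $G=(S,M,\Gamma_1,\Gamma_2,\delta)$: finite states, finite moves, nonempty move sets $\Gamma_i(s)$, $\delta(s,a_1,a_2)\in\mathrm{Distr}(S)$ (simultaneous independent moves); $\mathrm{Dest}(s,a_1,a_2)=\mathrm{supp}\,\delta(s,a_1,a_2)$. Selectors assign to each state a distribution on available moves. For a valuation $v:S\to[0,1]$: $\mathrm{Pre}_{\xi_1,\xi_2}(v)(s)=\sum_{a,b}\sum_tv(t)\delta(s,a,b)(t)\xi_1(s)(a)\xi_2(s)(b)$, $\mathrm{Pre}_{1:\xi_1}(v)(s)=\inf_{\xi_2}\mathrm{Pre}_{\xi_1,\xi_2}(v)(s)$, $\mathrm{Pre}_1(v)(s)=\sup_{\xi_1}\mathrm{Pre}_{1:\xi_1}(v)(s)$. Fix $T\subseteq S$; $W_2$ is the set of states from which player 1's value for reaching $T$ ($\sup_{\pi_1}\inf_{\pi_2}$ of the probability of visiting $T$) is 0; all states of $T\cup W_2$ are assumed absorbing. Value iteration: $u_0=[T]$ (indicator of $T$), $u_{k+1}=\mathrm{Pre}_1(u_k)$. For each $j\ge1$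 fix a player-1 selector $\zeta_j$ with $\mathrm{Pre}_{1:\zeta_j}(u_{j-1})=\mathrm{Pre}_1(u_{j-1})$. Entry time: $\ell_k(s)=\min\{j\le k:u_j(s)=u_k(s)\}$. Selector $\eta_k$: $\eta_k(s)=\zeta_{\ell_k(s)}(s)$ if $\ell_k(s)>0$, and $\eta_k(s)$ uniform on $\Gamma_1(s)$ if $\ell_k(s)=0$. $\mathrm{Dest}_k(s,a_2)=\bigcup_{a_1\in\mathrm{supp}(\eta_k(s))}\mathrm{Dest}(s,a_1,a_2)$. Value classes: $U^k_r=\{s:u_k(s)=r\}$ and $U^k_{>r}=\{s:u_k(s)>r\}$. *)

From mathcomp Require Import all_boot all_order all_algebra.
From mathcomp Require Import boolp classical_sets reals.
Set Implicit Arguments. Unset Strict Implicit. Unset Printing Implicit Defensive.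
Import Order.TTheory GRing.Theory Num.Theory.
Local Open Scope ring_scope.

Section ConcurrentGame.
Variables (R : realType) (S M : finType).
Variable delta : S -> M -> M -> {ffun S -> R}.
Variables (Gam1 Gam2 : S -> {set M}).
Variable T : {set S}.

Definition distr_on (A : {set M}) (d : {ffun M -> R}) : Prop :=
  (forall a, 0 <= d a) /\ (\sum_a d a = 1) /\ (forall a, a \notin A -> d a = 0).

Definition is_distr (d : {ffun S -> R}) : Prop :=
  (forall t, 0 <= d t) /\ \sum_t d t = 1.

Definition game_wf : Prop :=
  (forall s, Gam1 s != finset.set0) /\ (forall s, Gam2 s != finset.set0) /\
  (forall s a1 a2, is_distr (delta s a1 a2)).

Definition Dest (s : S) (a1 a2 : M) : {set S} := [set t | delta s a1 a2 t != 0].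

Definition selector := S -> {ffun M -> R}.
Definition selector1 (xi : selector) : Prop := forall s, distr_on (Gam1 s) (xi s).
Definition selector2 (xi : selector) : Prop := forall s, distr_on (Gam2 s) (xi s).

Definition Pre_sel (xi1 xi2 : selector) (v : S -> R) (s : S) : R :=
  \sum_a \sum_b \sum_t v t * delta s a b t * xi1 s a * xi2 s b.

Definition Pre1_sel (xi1 : selector) (v : S -> R) (s : S) : R :=
  inf [set Pre_sel xi1 xi2 v s | xi2 in selector2]%classic.

Definition Pre1 (v : S -> R) (s : S) : R :=
  sup [set Pre1_sel xi1 v s | xi1 in selector1]%classic.

Fixpoint u (k : nat) : S -> R :=
  match k with
  | 0 => fun s => (s \in T)%:R
  | k'.+1 => Pre1 (u k')
  end.

Definition ell (k : nat) (s : S) : nat :=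
  find (fun j => u j s == u k s) (iota 0 k.+1).

Definition uniform_on (A : {set M}) : {ffun M -> R} :=
  [ffun a => if a \in A then (#|A|%:R)^-1 else 0].

(* eta_k, built from the fixed family of optimal selectors zeta_j *)
Definition eta (zeta : nat -> selector) (k : nat) : selector :=
  fun s => if (0 < ell k s)%N then zeta (ell k s) s else uniform_on (Gam1 s).

Definition Dest_k (zeta : nat -> selector) (k : nat) (s : S) (a2 : M) : {set S} :=
  \bigcup_(a1 | eta zeta k s a1 != 0) Dest s a1 a2.

(* a strategy maps a history (past states p, current state s) to a distribution *)
Definition strategy := seq S -> S -> {ffun M -> R}.
Definition strategy1 (sg : strategy) : Prop := forall p s, distr_on (Gam1 s) (sg p s).
Definition strategy2 (sg : strategy) : Prop := forall p s, distr_on (Gam2 s) (sg p s).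

Fixpoint reach_within (sg1 sg2 : strategy) (n : nat) (p : seq S) (s : S) : R :=
  if s \in T then 1 else
  match n with
  | 0 => 0
  | n'.+1 => \sum_a \sum_b sg1 p s a * sg2 p s b *
              \sum_t delta s a b t * reach_within sg1 sg2 n' (rcons p s) t
  end.

Definition reach_prob (sg1 sg2 : strategy) (s : S) : R :=
  sup [set reach_within sg1 sg2 n [::] s | n in [set: nat]]%classic.

Definition value1 (s : S) : R :=
  sup [set inf [set reach_prob sg1 sg2 s | sg2 in strategy2]%classic | sg1 in strategy1]%classic.

Definition W2 (s : S) : Prop := value1 s = 0.

Definition absorbing_TW2 : Prop :=
  forall s, s \in T \/ W2 s -> forall a1 a2, Dest s a1 a2 = [set s].

End ConcurrentGame.

From mathcomp Require Import all_boot all_order all_algebra.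
From mathcomp Require Import boolp classical_sets reals.
From mathcomp Require Import ring.
Import Order.TTheory GRing.Theory Num.Theory.
Local Open Scope ring_scope.
Set Implicit Arguments. Unset Strict Implicit. Unset Printing Implicit Defensive.

(* Let l = ell_k(s) be the entry time of s, so that eta_k(s) = zeta_l(s) is
   optimal for u_l(s) = u_k(s) = r with respect to u_(l-1).  Against the pure
   reply a2, the successors t of s reached under eta_k(s) thus average u_(l-1)
   to at least r.  If none of them has u_k(t) > r, then u_(l-1)(t) <= u_k(t) <= r
   by monotonicity of value iteration, so an average of values at most r is at
   least r: every such t has u_(l-1)(t) = u_k(t) = r, whence ell_k(t) <= l - 1. *)

Lemma convex_comb_eq_max (R : realFieldType) (I : finType) (w f : I -> R) (r : R) :
  (forall i, 0 <= w i) -> \sum_i w i = 1 ->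
  (forall i, w i != 0 -> f i <= r) -> r <= \sum_i w i * f i ->
  forall i, w i != 0 -> f i = r.
Proof.
move=> w_ge0 w_sum f_le r_le i wi_neq0.
have term_ge0 j : 0 <= w j * (r - f j).
  have [->|wj_neq0] := eqVneq (w j) 0; first by rewrite mul0r.
  by rewrite mulr_ge0 // subr_ge0 f_le.
have terms_sum0 : \sum_j w j * (r - f j) = 0.
  apply/le_anti; rewrite sumr_ge0 // andbT.
  under eq_bigr do rewrite mulrBr.
  by rewrite sumrB -mulr_suml w_sum mul1r subr_le0.
have /eqP := psumr_eq0P (fun j _ => term_ge0 j) terms_sum0 (i:=i) isT.
by rewrite mulf_eq0 (negbTE wi_neq0) subr_eq0 => /eqP.
Qed.

Lemma uniform_on_distr (R : realType) (M : finType) (A : {set M}) :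
  A != finset.set0 -> distr_on A (uniform_on R A).
Proof.
move=> A_neq0; split; [|split].
- by move=> a; rewrite ffunE; case: ifP => // _; rewrite invr_ge0 ler0n.
- under eq_bigr do rewrite ffunE.
  rewrite -big_mkcond /= sumr_const -[_ *+ #|A|]mulr_natr mulVf // pnatr_eq0 -lt0n.
  by rewrite card_gt0.
- by move=> a a_notin; rewrite ffunE (negbTE a_notin).
Qed.

Section ValueIteration.
Variables (R : realType) (S M : finType).
Variable delta : S -> M -> M -> {ffun S -> R}.
Variables (Gam1 Gam2 : S -> {set M}) (T : {set S}).
Hypothesis Hwf : game_wf delta Gam1 Gam2.

Local Notation selector := (selector R S M).
Local Notation selector1 := (selector1 Gam1).
Local Notation selector2 := (selector2 Gam2).
Local Notation Pre_sel := (Pre_sel delta).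
Local Notation Pre1_sel := (Pre1_sel delta Gam2).
Local Notation Pre1 := (Pre1 delta Gam1 Gam2).
Local Notation u := (u delta Gam1 Gam2 T).
Local Notation ell := (ell delta Gam1 Gam2 T).

Definition is_valuation (v : S -> R) := forall t, 0 <= v t <= 1.

Definition uniform_sel1 : selector := fun s => uniform_on R (Gam1 s).
Definition uniform_sel2 : selector := fun s => uniform_on R (Gam2 s).

Lemma uniform_sel1_selector1 : selector1 uniform_sel1.
Proof. by move=> s; apply: uniform_on_distr; case: Hwf. Qed.

Lemma uniform_sel2_selector2 : selector2 uniform_sel2.
Proof. by move=> s; apply: uniform_on_distr; case: Hwf => _ []. Qed.

(* Only the choice at s0 matters; elsewhere any legal distribution will do. *)
Definition pure_sel2 (s0 : S) (a2 : M) : selector :=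
  fun s => if s == s0 then [ffun b => (b == a2)%:R] else uniform_on R (Gam2 s).

Lemma pure_sel2_selector2 s0 a2 : a2 \in Gam2 s0 -> selector2 (pure_sel2 s0 a2).
Proof.
move=> a2_in s; rewrite /pure_sel2; case: eqP => [->|_]; last exact: uniform_sel2_selector2.
split; [|split].
- by move=> a; rewrite ffunE ler0n.
- rewrite (bigD1 a2) //= big1 ?ffunE ?eqxx ?addr0 // => b b_neq.
  by rewrite ffunE (negbTE b_neq).
- by move=> a a_notin; rewrite ffunE; case: eqP => // a_eq; rewrite a_eq a2_in in a_notin.
Qed.

Section FixedSelectors.
Variables (xi1 xi2 : selector).
Hypotheses (xi1_sel : selector1 xi1) (xi2_sel : selector2 xi2).

Lemma Pre_sel_mono v w s :
  (forall t, v t <= w t) -> Pre_sel xi1 xi2 v s <= Pre_sel xi1 xi2 w s.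
Proof.
move=> le_vw; apply: ler_sum => a _; apply: ler_sum => b _; apply: ler_sum => t _.
rewrite -!mulrA ler_wpM2r // !mulr_ge0 //.
- exact: (Hwf.2.2 s a b).1.
- exact: (xi1_sel s).1.
- exact: (xi2_sel s).1.
Qed.

Lemma Pre_sel_cst c s : Pre_sel xi1 xi2 (fun _ => c) s = c.
Proof.
have [_ [sum1 _]] := xi1_sel s; have [_ [sum2 _]] := xi2_sel s.
rewrite -[RHS]mulr1 -{1}sum1 mulr_sumr; apply: eq_bigr => a _.
rewrite -[RHS]mulr1 -{1}sum2 !mulr_sumr; apply: eq_bigr => b _.
rewrite -!mulr_suml -mulr_sumr (Hwf.2.2 s a b).2; ring.
Qed.

Lemma Pre_sel_valuation v s : is_valuation v -> 0 <= Pre_sel xi1 xi2 v s <= 1.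
Proof.
move=> v01; apply/andP; split.
- by rewrite -{1}(Pre_sel_cst 0 s); apply: Pre_sel_mono => t; case/andP: (v01 t).
- by rewrite -(Pre_sel_cst 1 s); apply: Pre_sel_mono => t; case/andP: (v01 t).
Qed.

End FixedSelectors.

Lemma Pre1_sel_le xi1 xi2 v s : selector1 xi1 -> selector2 xi2 -> is_valuation v ->
  Pre1_sel xi1 v s <= Pre_sel xi1 xi2 v s.
Proof.
move=> xi1_sel xi2_sel v01; apply: ge_inf; last by exists xi2.
by exists 0 => _ [xi xi_sel <-]; case/andP: (Pre_sel_valuation xi1_sel xi_sel s v01).
Qed.

Lemma Pre1_sel_ge xi1 v s c :
  (forall xi2, selector2 xi2 -> c <= Pre_sel xi1 xi2 v s) -> c <= Pre1_sel xi1 v s.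
Proof.
move=> c_le; apply: lb_le_inf; last by move=> _ [xi2 xi2_sel <-]; apply: c_le.
exists (Pre_sel xi1 uniform_sel2 v s), uniform_sel2 => //.
exact: uniform_sel2_selector2.
Qed.

Lemma Pre1_sel_valuation xi1 v : selector1 xi1 -> is_valuation v ->
  is_valuation (Pre1_sel xi1 v).
Proof.
move=> xi1_sel v01 s; apply/andP; split.
  by apply: Pre1_sel_ge => xi2 xi2_sel; case/andP: (Pre_sel_valuation xi1_sel xi2_sel s v01).
apply: le_trans (Pre1_sel_le s xi1_sel uniform_sel2_selector2 v01) _.
by case/andP: (Pre_sel_valuation xi1_sel uniform_sel2_selector2 s v01).
Qed.

Lemma Pre1_sel_le_Pre1 xi1 v s : selector1 xi1 -> is_valuation v ->
  Pre1_sel xi1 v s <= Pre1 v s.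
Proof.
move=> xi1_sel v01; apply: ub_le_sup; last by exists xi1.
by exists 1 => _ [xi xi_sel <-]; case/andP: (Pre1_sel_valuation xi_sel v01 s).
Qed.

Lemma Pre1_le v s c :
  (forall xi1, selector1 xi1 -> Pre1_sel xi1 v s <= c) -> Pre1 v s <= c.
Proof.
move=> le_c; apply: ge_sup; last by move=> _ [xi1 xi1_sel <-]; apply: le_c.
exists (Pre1_sel uniform_sel1 v s), uniform_sel1 => //.
exact: uniform_sel1_selector1.
Qed.

Lemma Pre1_valuation v : is_valuation v -> is_valuation (Pre1 v).
Proof.
move=> v01 s; have sel := uniform_sel1_selector1.
apply/andP; split; last first.
  by apply: Pre1_le => xi1 xi1_sel; case/andP: (Pre1_sel_valuation xi1_sel v01 s).
apply: le_trans (Pre1_sel_le_Pre1 s sel v01).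
by case/andP: (Pre1_sel_valuation sel v01 s).
Qed.

Lemma Pre1_mono v w : is_valuation v -> is_valuation w ->
  (forall t, v t <= w t) -> forall s, Pre1 v s <= Pre1 w s.
Proof.
move=> v01 w01 le_vw s; apply: Pre1_le => xi1 xi1_sel.
apply: le_trans (Pre1_sel_le_Pre1 s xi1_sel w01); apply: Pre1_sel_ge => xi2 xi2_sel.
exact: le_trans (Pre1_sel_le s xi1_sel xi2_sel v01) (Pre_sel_mono xi1_sel xi2_sel s le_vw).
Qed.

Lemma u_valuation j : is_valuation (u j).
Proof.
elim: j => [|j IH] t /=; first by case: (t \in T); rewrite ?lexx ?ler01.
exact: Pre1_valuation.
Qed.

Lemma has_entry_time k t : has (fun j => u j t == u k t) (iota 0 k.+1).
Proof. by apply/hasP; exists k; rewrite ?mem_iota /= ?eqxx. Qed.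

Lemma ell_le k t : (ell k t <= k)%N.
Proof. by have := has_entry_time k t; rewrite has_find size_iota. Qed.

Lemma u_ell k t : u (ell k t) t = u k t.
Proof.
have /eqP := nth_find 0%N (has_entry_time k t).
by rewrite nth_iota ?add0n // ltnS ell_le.
Qed.

Lemma ell_gt0 k t : t \notin T -> 0 < u k t -> (0 < ell k t)%N.
Proof.
move=> t_notin; rewrite lt0n -u_ell; apply: contraTneq => ->.
by rewrite /= (negbTE t_notin) ltxx.
Qed.

Lemma ell_minimal k t j : (j <= k)%N -> u j t = u k t -> (ell k t <= j)%N.
Proof.
move=> le_jk u_eq; rewrite leqNgt; apply/negP => lt_j.
by have := before_find 0%N lt_j; rewrite nth_iota ?add0n ?u_eq ?eqxx.
Qed.

Hypothesis Habs : absorbing_TW2 delta Gam1 Gam2 T.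

(* On the absorbing set T, one step of any play stays at t, so Pre1 keeps the value 1. *)
Lemma u0_le_u1 t : u 0 t <= u 1 t.
Proof.
have [t_in|t_notin] := boolP (t \in T); last first.
  by rewrite /= (negbTE t_notin); case/andP: (u_valuation 1 t).
have sel1 := uniform_sel1_selector1.
apply: le_trans (Pre1_sel_le_Pre1 t sel1 (u_valuation 0)); apply: Pre1_sel_ge => xi2 xi2_sel.
suff -> : Pre_sel uniform_sel1 xi2 (u 0) t = Pre_sel uniform_sel1 xi2 (fun _ => 1) t.
  by rewrite (Pre_sel_cst sel1 xi2_sel) /= t_in.
apply: eq_bigr => a _; apply: eq_bigr => b _; apply: eq_bigr => t' _.
have [->|t'_neq] := eqVneq t' t; first by rewrite /= t_in.
have : t' \notin Dest delta t a b by rewrite (Habs (or_introl t_in)) !inE.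
by rewrite inE negbK => /eqP ->; rewrite !(mulr0, mul0r).
Qed.

Lemma u_mono i j t : (i <= j)%N -> u i t <= u j t.
Proof.
have u_succ n t' : u n t' <= u n.+1 t'.
  elim: n t' => [|n IH] t'; first exact: u0_le_u1.
  exact: Pre1_mono (u_valuation n) (u_valuation n.+1) IH t'.
elim: j => [|j IH]; first by rewrite leqn0 => /eqP ->.
by rewrite leq_eqVlt => /orP [/eqP -> //| /IH le_ij]; apply: le_trans le_ij (u_succ j t).
Qed.

Definition reply_weight (d : {ffun M -> R}) (s : S) (a2 : M) (p : M * S) : R :=
  d p.1 * delta s p.1 a2 p.2.

Section Reply.
Variables (d : {ffun M -> R}) (s : S) (a2 : M).
Hypothesis d_distr : distr_on (Gam1 s) d.

Lemma reply_weight_ge0 p : 0 <= reply_weight d s a2 p.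
Proof. by rewrite mulr_ge0 //; [exact: d_distr.1 | exact: (Hwf.2.2 s p.1 a2).1]. Qed.

Lemma reply_weight_sum1 : \sum_p reply_weight d s a2 p = 1.
Proof.
rewrite -(pair_bigA _ (fun a t => d a * delta s a a2 t)) -d_distr.2.1 /=.
by apply: eq_bigr => a _; rewrite -mulr_sumr (Hwf.2.2 s a a2).2 mulr1.
Qed.

Lemma reply_support_nonempty : exists p, reply_weight d s a2 p != 0.
Proof.
have sum_neq0 : \sum_p reply_weight d s a2 p <> 0.
  by rewrite reply_weight_sum1; apply/eqP/oner_neq0.
have [p /andP [_ w_gt0]] := psumr_neq0P (fun p _ => reply_weight_ge0 p) sum_neq0.
by exists p; rewrite lt0r_neq0.
Qed.

Lemma reply_support_eq (v w : S -> R) (r : R) :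
  (forall t, v t <= w t) -> r <= \sum_p reply_weight d s a2 p * v p.2 ->
  (forall p, reply_weight d s a2 p != 0 -> w p.2 <= r) ->
  forall p, reply_weight d s a2 p != 0 -> v p.2 = r /\ w p.2 = r.
Proof.
move=> le_vw r_le w_le p p_supp.
have v_le q : reply_weight d s a2 q != 0 -> v q.2 <= r.
  by move=> q_supp; apply: le_trans (le_vw q.2) (w_le q q_supp).
have v_eq := convex_comb_eq_max reply_weight_ge0 reply_weight_sum1 v_le r_le p_supp.
by split=> //; apply/le_anti; rewrite w_le //= -v_eq.
Qed.

End Reply.

Lemma Pre1_sel_le_reply xi1 v s a2 : selector1 xi1 -> is_valuation v -> a2 \in Gam2 s ->
  Pre1_sel xi1 v s <= \sum_p reply_weight (xi1 s) s a2 p * v p.2.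
Proof.
move=> xi1_sel v01 a2_in.
apply: le_trans (Pre1_sel_le s xi1_sel (pure_sel2_selector2 a2_in) v01) _.
rewrite -(pair_bigA _ (fun a t => reply_weight (xi1 s) s a2 (a, t) * v t)).
rewrite le_eqVlt; apply/orP; left; apply/eqP; apply: eq_bigr => a _.
rewrite (bigD1 a2) //= [X in _ + X]big1 ?addr0 => [|b b_neq].
  by apply: eq_bigr => t _; rewrite /pure_sel2 eqxx ffunE eqxx /reply_weight /=; ring.
by apply: big1 => t _; rewrite /pure_sel2 eqxx ffunE (negbTE b_neq) mulr0.
Qed.

Lemma mem_Dest_k zeta k s a2 t :
  reflect (exists a, reply_weight (eta delta Gam1 Gam2 T zeta k s) s a2 (a, t) != 0)
          (t \in Dest_k delta Gam1 Gam2 T zeta k s a2).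
Proof.
apply: (iffP bigcupP) => [[a eta_a]|[a]].
  by rewrite inE => delta_t; exists a; rewrite mulf_neq0.
by rewrite mulf_eq0 negb_or => /andP [eta_a delta_t]; exists a; rewrite ?inE.
Qed.

End ValueIteration.

Theorem lemma4 (R : realType) (S M : finType)
    (delta : S -> M -> M -> {ffun S -> R}) (Gam1 Gam2 : S -> {set M})
    (T : {set S}) (zeta : nat -> selector R S M)
    (Hwf : game_wf delta Gam1 Gam2)
    (Habs : absorbing_TW2 delta Gam1 Gam2 T)
    (Hzeta : forall j : nat, (1 <= j)%N ->
       selector1 Gam1 (zeta j) /\
       Pre1_sel delta Gam2 (zeta j) (u delta Gam1 Gam2 T j.-1) =
       Pre1 delta Gam1 Gam2 (u delta Gam1 Gam2 T j.-1))
    (r : R) (k : nat) (s : S)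
    (Hr0 : 0 < r) (Hr1 : r <= 1)
    (HsT : s \notin T) (HsW : ~ W2 delta Gam1 Gam2 T s)
    (Hsr : u delta Gam1 Gam2 T k s = r) :
  forall a2, a2 \in Gam2 s ->
    (exists t, t \in Dest_k delta Gam1 Gam2 T zeta k s a2 /\
                r < u delta Gam1 Gam2 T k t)
    \/
    ((forall t, t \in Dest_k delta Gam1 Gam2 T zeta k s a2 ->
                u delta Gam1 Gam2 T k t = r) /\
     (exists t, t \in Dest_k delta Gam1 Gam2 T zeta k s a2 /\
                (ell delta Gam1 Gam2 T k t < ell delta Gam1 Gam2 T k s)%N)).
Proof.
move=> a2 a2_in.
set u := u delta Gam1 Gam2 T; set Dk := Dest_k _ _ _ _ _ _ _ _.
set l := ell delta Gam1 Gam2 T k s.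
have l_gt0 : (0 < l)%N by apply: ell_gt0 HsT _; rewrite Hsr.
have [zeta_sel zeta_opt] := Hzeta l l_gt0.
set d := eta delta Gam1 Gam2 T zeta k s.
have d_eq : d = zeta l s by rewrite /d /eta -/l l_gt0.
have d_distr : distr_on (Gam1 s) d by rewrite d_eq; apply: zeta_sel.
have r_le : r <= \sum_p reply_weight delta d s a2 p * u l.-1 p.2.
  rewrite d_eq -Hsr -(u_ell delta Gam1 Gam2 T k s) -/l -{1}(prednK l_gt0) /= -zeta_opt.
  by apply: (Pre1_sel_le_reply Hwf zeta_sel _ a2_in); apply: u_valuation.
have [up|no_up] := pselect (exists t, t \in Dk /\ r < u k t); [by left | right].
have le_lk : (l.-1 <= k)%N := leq_trans (leq_pred l) (ell_le _ _ _ _ _ _).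
have on_dest : forall p, reply_weight delta d s a2 p != 0 -> u l.-1 p.2 = r /\ u k p.2 = r.
  apply: (reply_support_eq Hwf d_distr (fun t => u_mono Hwf Habs t le_lk) r_le) => -[a t] p_supp.
  rewrite leNgt; apply: contra_notN no_up => lt_r.
  by exists t; split=> //; apply/mem_Dest_k; exists a.
split=> [t /mem_Dest_k [a /on_dest []] //|].
have [[a t] p_supp] := reply_support_nonempty Hwf a2 d_distr.
have [eq_l eq_k] := on_dest _ p_supp.
exists t; split; first by apply/mem_Dest_k; exists a.
apply: (@leq_ltn_trans l.-1); last by rewrite ltn_predL.
by apply: ell_minimal le_lk _; rewrite -/u eq_l eq_k.
Qed.
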